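(* Let $m\geq 3$ be an integer and let $P$ be the uniform distribution (normalized one-dimensional length measure) on the boundary of a regular $m$-sided polygon $A_1A_2\cdots A_m$ inscribed in the unit circle $x_1^2+x_2^2=1$ in $\mathbb{R}^2$. Let $\beta=\{A_1,\dots,A_m\}$ be the set of vertices of the polygon, and for $n\geq m$ let $V_n$ denote the $n$th conditional quantization error of $P$ with respect to $\beta$, and $V_\infty=\lim_{n\to\infty}V_n$. Then the conditional quantization coefficient of $P$ exists as a finite positive number and \[\lim_{n\to\infty} n^2\,(V_n-V_\infty)=\frac13\, m^2\sin^2\frac{\pi}{m}.\]
   Context: Conditional quantization: for a Borel probability measure $P$ on $\mathbb{R}^2$ (Euclidean norm $\|\cdot\|$) and a finite set $\beta\subset\mathbb{R}^2$ with $\mathrm{card}(\beta)=\ell$, for $n\geq \ell$ the $n$th conditional quantization error with respect to $\beta$ is $V_n=\inf\{\int \min_{a\in\alpha\cup\beta}\|x-a\|^2\,dP(x):\alpha\subset\mathbb{R}^2,\ \mathrm{card}(\alpha)\leq n-\ell\}$. The vertices may be taken as $A_j=(\cos\theta_j,\sin\theta_j)$ with $\theta_j=\frac{3\pi}{2}-\frac{\pi}{m}+(j-1)\frac{2\pi}{m}$, $1\le j\le m$. *)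

From Stdlib Require Import Reals Lra List.
From Coquelicot Require Import Coquelicot.
Import ListNotations.
Open Scope R_scope.

Definition dist2 (x a : R * R) : R :=
  (fst x - fst a) ^ 2 + (snd x - snd a) ^ 2.

(* Vertex A_{j+1} (j = 0..m-1) of the regular m-gon inscribed in the unit circle:
   angle 3pi/2 - pi/m + j * 2pi/m. *)
Definition vertex (m j : nat) : R * R :=
  let th := 3 * PI / 2 - PI / INR m + INR j * (2 * PI / INR m) in
  (cos th, sin th).

Definition beta (m : nat) : list (R * R) := map (vertex m) (seq 0 m).

Definition min_dist2 (x a0 : R * R) (l : list (R * R)) : R :=
  fold_right (fun a acc => Rmin (dist2 x a) acc) (dist2 x a0) l.

Definition side_pt (m j : nat) (t : R) : R * R :=
  let A := vertex m j in
  let B := vertex m (S j mod m) in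
  (fst A + t * (fst B - fst A), snd A + t * (snd B - snd A)).

(* Integral of f with respect to P, the normalized length measure on the boundary
   of the polygon: all m sides have equal length, so P is the average over the
   sides of the uniform (arc-length) distribution on each side. *)
Definition P_integral (m : nat) (f : R * R -> R) : R :=
  / INR m * fold_right Rplus 0
    (map (fun j => RInt (fun t => f (side_pt m j t)) 0 1) (seq 0 m)).

Definition cond_distortion (m : nat) (alpha : list (R * R)) : R :=
  P_integral m (fun x => min_dist2 x (vertex m 0) (alpha ++ beta m)).

(* n-th conditional quantization error w.r.t. beta: infimum over alpha with
   card(alpha) <= n - m (lists of length <= n - m represent such finite sets). *)
Definition V (m n : nat) : R :=
  real (Glb_Rbar (fun v => exists alpha : list (R * R),
          (length alpha <= n - m)%nat /\ v = cond_distortion m alpha)).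

(* Let D = |A_j A_(j+1)|^2 = 4 sin^2 (pi / m) and parametrize each side by [0, 1].

   Upper bound: q - 1 equally spaced points on every side, q = n / m, leave on each of the q
   sub-segments a distortion of at most D / (12 q^3), so V_n <= D / (12 q^2).

   Lower bound: assign every code point to a side whose midpoint is best aligned with it.  On
   the middle part [eta, 1 - eta] of side j, code points assigned to other sides stay at a
   distance bounded below in terms of eta, and those assigned to side j act through their
   projections onto the side.  Splitting the interval at a projected point and using the
   subadditivity of the convex, homogeneous map (d, N) |-> d^3 / N^2, k such points leave a
   distortion of at least min (c_eta, D (1 - 2 eta)^3 / (12 (k + 1)^2)) for some c_eta > 0;
   summing over the sides in the same way bounds V_n below by
   min (c_eta / m, D m^2 (1 - 2 eta)^3 / (12 (n + 2 m + 1)^2)).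

   Letting n -> oo and then eta -> 0 gives n^2 V_n -> D m^2 / 12, hence V_oo = 0. *)

From Stdlib Require Import Reals Lra Lia List Arith.
From Coquelicot Require Import Coquelicot.
Import ListNotations.
Open Scope R_scope.

(** * Integrals of continuous functions *)

Lemma continuous_Rmin (f g : R -> R) (x : R) :
  continuous f x -> continuous g x -> continuous (fun y => Rmin (f y) (g y)) x.
Proof.
  intros Hf Hg.
  apply continuous_ext with (f := fun y => (f y + (g y + - Rabs (f y + - g y))) * / 2).
  { intros y. unfold Rmin. destruct Rle_dec.
    - rewrite Rabs_left1; lra.
    - rewrite Rabs_right; lra. }
  apply (continuous_mult (fun y => f y + (g y + - Rabs (f y + - g y))) (fun _ => / 2)).
  2: apply continuous_const.
  apply (continuous_plus f); [exact Hf|].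
  apply (continuous_plus g); [exact Hg|].
  apply (continuous_opp (fun y => Rabs (f y + - g y))).
  apply continuous_Rabs_comp.
  apply (continuous_plus f); [exact Hf|].
  apply (continuous_opp g); exact Hg.
Qed.

Lemma continuous_scal_sq (D a t : R) : continuous (fun s => D * (s - a) ^ 2) t.
Proof. apply (@ex_derive_continuous R_AbsRing R_NormedModule). auto_derive. auto. Qed.

Lemma RInt_scal_sq (D a x y : R) :
  RInt (fun t => D * (t - a) ^ 2) x y = D * (y - a) ^ 3 / 3 - D * (x - a) ^ 3 / 3.
Proof.
  apply is_RInt_unique.
  replace (D * (y - a) ^ 3 / 3 - D * (x - a) ^ 3 / 3) with
    (minus (D * (y - a) ^ 3 / 3) (D * (x - a) ^ 3 / 3)) by reflexivity.
  apply (is_RInt_derive (fun t => D * (t - a) ^ 3 / 3)).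
  - intros t _. auto_derive; [auto | field].
  - intros t _. apply continuous_scal_sq.
Qed.

Section ContinuousIntegrand.

Variable f : R -> R.
Hypothesis f_cont : forall t, continuous f t.

Lemma ex_RInt_cont (a b : R) : ex_RInt f a b.
Proof. apply (@ex_RInt_continuous R_CompleteNormedModule). intros; apply f_cont. Qed.

Lemma RInt_Chasles_cont (a b c : R) : RInt f a c = RInt f a b + RInt f b c.
Proof. rewrite <- (RInt_Chasles f a b c); auto using ex_RInt_cont. Qed.

Lemma RInt_le_scal_sq (D a x y : R) : x <= y ->
  (forall t, x <= t <= y -> f t <= D * (t - a) ^ 2) ->
  RInt f x y <= D * (y - a) ^ 3 / 3 - D * (x - a) ^ 3 / 3.
Proof.
  intros Hxy H. rewrite <- RInt_scal_sq.
  apply RInt_le; auto using ex_RInt_cont.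
  - apply (@ex_RInt_continuous R_CompleteNormedModule); intros; apply continuous_scal_sq.
  - intros t Ht. apply H. lra.
Qed.

Lemma RInt_ge_scal_sq (D a x y : R) : x <= y ->
  (forall t, x <= t <= y -> D * (t - a) ^ 2 <= f t) ->
  D * (y - a) ^ 3 / 3 - D * (x - a) ^ 3 / 3 <= RInt f x y.
Proof.
  intros Hxy H. rewrite <- RInt_scal_sq.
  apply RInt_le; auto using ex_RInt_cont.
  - apply (@ex_RInt_continuous R_CompleteNormedModule); intros; apply continuous_scal_sq.
  - intros t Ht. apply H. lra.
Qed.

Lemma RInt_le_between_parabolas (D a b : R) : a <= b ->
  (forall t, a <= t <= b -> f t <= D * (t - a) ^ 2 /\ f t <= D * (t - b) ^ 2) ->
  RInt f a b <= D * (b - a) ^ 3 / 12.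
Proof.
  intros Hab H.
  rewrite (RInt_Chasles_cont a ((a + b) / 2) b).
  assert (H1 := RInt_le_scal_sq D a a ((a + b) / 2) ltac:(lra)
                  (fun t Ht => proj1 (H t ltac:(lra)))).
  assert (H2 := RInt_le_scal_sq D b ((a + b) / 2) b ltac:(lra)
                  (fun t Ht => proj2 (H t ltac:(lra)))).
  replace (D * (b - a) ^ 3 / 12) with
    ((D * ((a + b) / 2 - a) ^ 3 / 3 - D * (a - a) ^ 3 / 3) +
     (D * (b - b) ^ 3 / 3 - D * ((a + b) / 2 - b) ^ 3 / 3)) by field.
  lra.
Qed.

Lemma RInt_le_grid (D : R) (q : nat) : (1 <= q)%nat ->
  (forall i t, (i <= q)%nat -> f t <= D * (t - INR i / INR q) ^ 2) ->
  RInt f 0 1 <= D / (12 * INR q ^ 2).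
Proof.
  intros Hq H. assert (Hq' : 0 < INR q) by (apply lt_0_INR; lia).
  assert (Hk : forall k, (k <= q)%nat -> RInt f 0 (INR k / INR q) <= INR k * (D / (12 * INR q ^ 3))).
  { induction k as [| k IH]; intros Hk.
    - replace (INR 0 / INR q) with 0 by (simpl; field; lra). rewrite RInt_point. unfold zero; simpl. lra.
    - rewrite (RInt_Chasles_cont 0 (INR k / INR q)).
      assert (Hpiece : RInt f (INR k / INR q) (INR (S k) / INR q) <= D * (1 / INR q) ^ 3 / 12).
      { replace (1 / INR q) with (INR (S k) / INR q - INR k / INR q) by (rewrite S_INR; field; lra).
        apply RInt_le_between_parabolas; auto.
        - rewrite S_INR. apply Rmult_le_compat_r; [left; apply Rinv_0_lt_compat |]; lra.
        - intros t _. split; apply H; lia. }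
      specialize (IH ltac:(lia)). rewrite S_INR in Hpiece |- *.
      replace (D * (1 / INR q) ^ 3 / 12) with (D / (12 * INR q ^ 3)) in Hpiece by (field; lra).
      lra. }
  specialize (Hk q (le_n q)).
  replace (INR q / INR q) with 1 in Hk by (field; lra).
  replace (INR q * (D / (12 * INR q ^ 3))) with (D / (12 * INR q ^ 2)) in Hk by (field; lra).
  exact Hk.
Qed.

End ContinuousIntegrand.

(** * Quantization of an interval *)

(* Tangent plane, along the ray [d = L N], of the convex and positively homogeneous map
   [(d, N) |-> d^3 / N^2]. *)
Lemma cube_div_sq_tangent (d N L : R) : 0 <= d -> 0 < N -> 0 <= L ->
  3 * L ^ 2 * d - 2 * L ^ 3 * N <= d ^ 3 / N ^ 2.
Proof.
  intros Hd HN HL.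
  assert (E : d ^ 3 / N ^ 2 - (3 * L ^ 2 * d - 2 * L ^ 3 * N)
              = (d - L * N) ^ 2 * (d + 2 * L * N) / N ^ 2) by (field; lra).
  assert (0 <= (d - L * N) ^ 2 * (d + 2 * L * N) / N ^ 2).
  { apply Rmult_le_pos; [apply Rmult_le_pos; [apply pow2_ge_0 | nra] |].
    apply Rlt_le, Rinv_0_lt_compat. nra. }
  lra.
Qed.

Lemma cube_div_sq_subadditive (d1 d2 N1 N2 : R) :
  0 <= d1 -> 0 <= d2 -> 0 < N1 -> 0 < N2 ->
  (d1 + d2) ^ 3 / (N1 + N2) ^ 2 <= d1 ^ 3 / N1 ^ 2 + d2 ^ 3 / N2 ^ 2.
Proof.
  intros Hd1 Hd2 HN1 HN2.
  set (L := (d1 + d2) / (N1 + N2)).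
  assert (HL : 0 <= L) by (unfold L; apply Rmult_le_pos; [lra | apply Rlt_le, Rinv_0_lt_compat; lra]).
  assert (E : (d1 + d2) ^ 3 / (N1 + N2) ^ 2
              = (3 * L ^ 2 * d1 - 2 * L ^ 3 * N1) + (3 * L ^ 2 * d2 - 2 * L ^ 3 * N2))
    by (unfold L; field; lra).
  rewrite E.
  pose proof (cube_div_sq_tangent d1 N1 L Hd1 HN1 HL).
  pose proof (cube_div_sq_tangent d2 N2 L Hd2 HN2 HL).
  lra.
Qed.

Lemma Rmin_le_add (C X X1 X2 : R) : 0 <= C -> 0 <= X1 -> 0 <= X2 -> X <= X1 + X2 ->
  Rmin C X <= Rmin C X1 + Rmin C X2.
Proof. intros. unfold Rmin. destruct (Rle_dec C X), (Rle_dec C X1), (Rle_dec C X2); lra. Qed.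

Lemma Rmin_le_compat_l (C x y : R) : x <= y -> Rmin C x <= Rmin C y.
Proof. intros. unfold Rmin. destruct Rle_dec, Rle_dec; lra. Qed.

Section IntervalQuantization.

Variables (D e0 : R) (f : R -> R).
Hypotheses (D_pos : 0 < D) (e0_pos : 0 < e0).
Hypotheses (f_cont : forall t, continuous f t) (f_nonneg : forall t, 0 <= f t).

Definition covered (a b : R) (S : list R) : Prop :=
  forall t, a <= t <= b ->
    D * e0 ^ 2 <= f t \/ exists s, (s = a \/ s = b \/ In s S) /\ D * (t - s) ^ 2 <= f t.

(* [D d^3 / (12 (k + 1)^2)] is the integral of [D] times the squared distance to the nearest of
   [k] equally spaced points of an interval of length [d] and its two endpoints; the cap
   [2 D e0^3 / 3] reflects the truncation at [D e0^2]. *)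
Definition quant_bound (d : R) (k : nat) : R :=
  Rmin (2 * D * e0 ^ 3 / 3) (D * d ^ 3 / (12 * (INR k + 1) ^ 2)).

Lemma scal_sq_le_of_between (t x y : R) : D * (t - y) ^ 2 <= f t ->
  t <= x <= y \/ y <= x <= t -> D * (t - x) ^ 2 <= f t.
Proof. intros H Hx. assert ((t - x) ^ 2 <= (t - y) ^ 2) by nra. nra. Qed.

Lemma covered_restrict (a b a' b' : R) (S S' : list R) : a <= a' -> b' <= b ->
  (forall s, In s S -> a' <= s <= b' -> In s S' \/ s = a' \/ s = b') ->
  covered a b S -> covered a' b' S'.
Proof.
  intros Ha Hb HS H t Ht.
  destruct (H t ltac:(lra)) as [h | [s [Hs h]]]; [left; exact h | right].
  destruct (Rlt_le_dec s a') as [Hlt | Hle].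
  { exists a'. split; [now left |]. apply (scal_sq_le_of_between t a' s h). right; lra. }
  destruct (Rlt_le_dec b' s) as [Hgt | Hle'].
  { exists b'. split; [now right; left |]. apply (scal_sq_le_of_between t b' s h). left; lra. }
  exists s. split; [| exact h].
  destruct Hs as [Hs | [Hs | Hs]].
  - left. lra.
  - right; left. lra.
  - destruct (HS s Hs (conj Hle Hle')) as [H' | [H' | H']]; auto.
Qed.

Lemma quant_bound_antitone (d : R) (k1 k2 : nat) : 0 <= d -> (k1 <= k2)%nat ->
  quant_bound d k2 <= quant_bound d k1.
Proof.
  intros Hd Hk. unfold quant_bound. apply Rmin_le_compat_l.
  pose proof (pos_INR k1). pose proof (le_INR _ _ Hk).
  unfold Rdiv. apply Rmult_le_compat_l; [apply Rmult_le_pos; [lra | apply pow_le; lra] |].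
  apply Rinv_le_contravar; [nra |].
  apply Rmult_le_compat_l; [lra |]. apply pow_incr. lra.
Qed.

Lemma quant_bound_split (d1 d2 : R) (k1 k2 : nat) : 0 <= d1 -> 0 <= d2 ->
  quant_bound (d1 + d2) (S (k1 + k2)) <= quant_bound d1 k1 + quant_bound d2 k2.
Proof.
  intros Hd1 Hd2.
  assert (Hterm : forall d k, 0 <= d -> 0 <= D * d ^ 3 / (12 * (INR k + 1) ^ 2)).
  { intros d k Hd. pose proof (pos_INR k).
    apply Rmult_le_pos; [apply Rmult_le_pos; [lra | apply pow_le; lra] |].
    apply Rlt_le, Rinv_0_lt_compat. nra. }
  pose proof (pos_INR k1). pose proof (pos_INR k2).
  unfold quant_bound. apply Rmin_le_add; auto.
  - assert (0 < e0 ^ 3) by (apply pow_lt; lra). nra.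
  - rewrite S_INR, plus_INR.
    assert (E : forall d N, 0 < N -> D * d ^ 3 / (12 * N ^ 2) = D / 12 * (d ^ 3 / N ^ 2))
      by (intros; field; lra).
    replace (INR k1 + INR k2 + 1 + 1) with ((INR k1 + 1) + (INR k2 + 1)) by ring.
    rewrite !E by lra. rewrite <- Rmult_plus_distr_l.
    apply Rmult_le_compat_l; [lra |]. apply cube_div_sq_subadditive; lra.
Qed.

Lemma RInt_ge_quant_bound_nil (a b : R) : a <= b -> covered a b [] ->
  quant_bound (b - a) 0 <= RInt f a b.
Proof.
  intros Hab H.
  set (e := Rmin ((b - a) / 2) e0).
  assert (He : 0 <= e) by (apply Rmin_glb; lra).
  assert (Hea : e <= (b - a) / 2) by apply Rmin_l.
  assert (Hee : e <= e0) by apply Rmin_r.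
  assert (Hl : forall t, a <= t <= a + e -> D * (t - a) ^ 2 <= f t).
  { intros t Ht. destruct (H t ltac:(lra)) as [h | [s [[-> | [-> | []]] h]]].
    - assert ((t - a) ^ 2 <= e0 ^ 2) by (apply pow_incr; lra). nra.
    - exact h.
    - assert ((t - a) ^ 2 <= (t - b) ^ 2) by nra. nra. }
  assert (Hr : forall t, b - e <= t <= b -> D * (t - b) ^ 2 <= f t).
  { intros t Ht. destruct (H t ltac:(lra)) as [h | [s [[-> | [-> | []]] h]]].
    - assert ((t - b) ^ 2 <= e0 ^ 2) by nra. nra.
    - assert ((t - b) ^ 2 <= (t - a) ^ 2) by nra. nra.
    - exact h. }
  rewrite (RInt_Chasles_cont f f_cont a (a + e) b), (RInt_Chasles_cont f f_cont (a + e) (b - e) b).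
  pose proof (RInt_ge_scal_sq f f_cont D a a (a + e) ltac:(lra) Hl).
  pose proof (RInt_ge_scal_sq f f_cont D b (b - e) b ltac:(lra) Hr).
  assert (0 <= RInt f (a + e) (b - e)).
  { apply RInt_ge_0; auto using ex_RInt_cont; lra. }
  assert (Hq : quant_bound (b - a) 0 <= 2 * D * e ^ 3 / 3).
  { unfold quant_bound, e, Rmin at 2. simpl INR. destruct Rle_dec.
    - replace (2 * D * ((b - a) / 2) ^ 3 / 3) with (D * (b - a) ^ 3 / (12 * (0 + 1) ^ 2)) by field.
      apply Rmin_r.
    - apply Rmin_l. }
  replace (2 * D * e ^ 3 / 3) with
    ((D * (a + e - a) ^ 3 / 3 - D * (a - a) ^ 3 / 3) + (D * (b - b) ^ 3 / 3 - D * (b - e - b) ^ 3 / 3))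
    in Hq by field.
  lra.
Qed.

Lemma RInt_ge_quant_bound (S : list R) (a b : R) : a <= b -> covered a b S ->
  quant_bound (b - a) (length S) <= RInt f a b.
Proof.
  revert a b. induction S as [S IH] using (induction_ltof1 _ (@length R)).
  intros a b Hab Hcov.
  destruct S as [| s1 rest]; [now apply RInt_ge_quant_bound_nil |].
  assert (IHrest : forall S' a' b', (length S' <= length rest)%nat -> a' <= b' ->
            covered a' b' S' -> quant_bound (b' - a') (length S') <= RInt f a' b').
  { intros S' a' b' HS'. apply IH. unfold ltof. simpl. lia. }
  assert (Hdrop : ~ (a <= s1 <= b) -> quant_bound (b - a) (length (s1 :: rest)) <= RInt f a b).
  { intros Hout. apply Rle_trans with (quant_bound (b - a) (length rest));
      [apply quant_bound_antitone; [lra | simpl; lia] |].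
    apply IHrest; auto.
    apply (covered_restrict a b a b (s1 :: rest)); try lra; auto.
    intros s [<- | Hs] Hs'; [lra | now left]. }
  destruct (Rle_dec a s1) as [Ha1 | Ha1]; [| apply Hdrop; lra].
  destruct (Rle_dec s1 b) as [H1b | H1b]; [| apply Hdrop; lra].
  set (p := fun s => if Rle_dec s s1 then true else false).
  set (S1 := filter p rest). set (S2 := filter (fun s => negb (p s)) rest).
  assert (Hlen : (length S1 + length S2)%nat = length rest) by apply filter_length.
  assert (HS1 : forall s, In s rest -> s <= s1 -> In s S1).
  { intros s Hs Hs1. apply filter_In. unfold p. destruct Rle_dec; tauto. }
  assert (HS2 : forall s, In s rest -> s1 < s -> In s S2).
  { intros s Hs Hs1. apply filter_In. unfold p. destruct Rle_dec; [lra | tauto]. }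
  assert (IH1 : quant_bound (s1 - a) (length S1) <= RInt f a s1).
  { apply IHrest; [lia | lra |].
    apply (covered_restrict a b a s1 (s1 :: rest)); try lra; auto.
    intros s [<- | Hs] Hs'; [now right; right | left; apply HS1; auto; lra]. }
  assert (IH2 : quant_bound (b - s1) (length S2) <= RInt f s1 b).
  { apply IHrest; [lia | lra |].
    apply (covered_restrict a b s1 b (s1 :: rest)); try lra; auto.
    intros s [<- | Hs] Hs'; [now right; left |].
    destruct (Rle_dec s s1); [right; left; lra | left; apply HS2; auto; lra]. }
  pose proof (quant_bound_split (s1 - a) (b - s1) (length S1) (length S2) ltac:(lra) ltac:(lra)).
  replace (s1 - a + (b - s1)) with (b - a) in * by ring.
  simpl length. rewrite <- Hlen, (RInt_Chasles_cont f f_cont a s1 b). lra.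
Qed.

End IntervalQuantization.

Definition sumR {A : Type} (g : A -> R) (l : list A) : R := fold_right Rplus 0 (map g l).

Lemma sumR_le {A : Type} (g h : A -> R) (l : list A) :
  (forall x, In x l -> g x <= h x) -> sumR g l <= sumR h l.
Proof.
  induction l as [| x l IH]; intros H; unfold sumR in *; simpl; [lra |].
  pose proof (H x (or_introl eq_refl)).
  assert (fold_right Rplus 0 (map g l) <= fold_right Rplus 0 (map h l))
    by (apply IH; intros; apply H; right; auto).
  lra.
Qed.

Lemma sumR_const {A : Type} (c : R) (l : list A) : sumR (fun _ => c) l = INR (length l) * c.
Proof.
  induction l as [| x l IH]; unfold sumR in *; simpl length; [simpl; ring |].
  rewrite S_INR. simpl. rewrite IH. ring.
Qed.

Lemma sumR_nonneg {A : Type} (g : A -> R) (l : list A) :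
  (forall x, 0 <= g x) -> 0 <= sumR g l.
Proof.
  intros H. induction l as [| x l IH]; unfold sumR in *; simpl; [lra |].
  pose proof (H x). lra.
Qed.

Lemma quant_bound_sumR {A : Type} (D e0 : R) (d : A -> R) (k : A -> nat) (l : list A) :
  0 < D -> 0 < e0 -> (forall x, 0 <= d x) -> l <> [] ->
  quant_bound D e0 (sumR d l) (list_sum (map k l) + pred (length l))
  <= sumR (fun x => quant_bound D e0 (d x) (k x)) l.
Proof.
  intros HD He0 Hd Hl. destruct l as [| x l]; [contradiction |]. clear Hl.
  revert x. induction l as [| y l IH]; intros x; unfold sumR in *; simpl.
  - rewrite Rplus_0_r, !Nat.add_0_r. lra.
  - specialize (IH y). simpl in IH.
    pose proof (quant_bound_split D e0 HD He0 (d x) (d y + fold_right Rplus 0 (map d l))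
      (k x) (k y + list_sum (map k l) + length l) (Hd x)
      (Rplus_le_le_0_compat _ _ (Hd y) (sumR_nonneg d l Hd))).
    replace (k x + (k y + list_sum (map k l)) + S (length l))%nat
      with (S (k x + (k y + list_sum (map k l) + length l))) by lia.
    lra.
Qed.

Lemma list_sum_map_add {A : Type} (g h : A -> nat) (l : list A) :
  (list_sum (map (fun x => g x + h x) l) = list_sum (map g l) + list_sum (map h l))%nat.
Proof. induction l as [| x l IH]; simpl; lia. Qed.

Lemma list_sum_indicator_seq (x m : nat) : (x < m)%nat ->
  (list_sum (map (fun j => if x =? j then 1 else 0) (seq 0 m)) = 1)%nat.
Proof.
  intros Hx.
  assert (E : forall L, (list_sum (map (fun j => if x =? j then 1 else 0) L)
                        = count_occ Nat.eq_dec L x)%nat).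
  { induction L as [| j L IH]; simpl; [reflexivity |].
    rewrite IH. destruct (Nat.eqb_spec x j), (Nat.eq_dec j x); lia. }
  rewrite E. apply (NoDup_count_occ' Nat.eq_dec); [apply seq_NoDup | apply in_seq; lia].
Qed.

Lemma list_sum_length_filter_eqb {A : Type} (a : A -> nat) (m : nat) (l : list A) :
  (forall x, (a x < m)%nat) ->
  (list_sum (map (fun j => length (filter (fun x => a x =? j) l)) (seq 0 m)) = length l)%nat.
Proof.
  intros Ha. induction l as [| x l IH]; simpl.
  - induction (seq 0 m); simpl; auto.
  - rewrite (map_ext _ (fun j => (if a x =? j then 1 else 0) + length (filter (fun y => a y =? j) l))%nat)
      by (intros j; simpl; destruct (a x =? j); reflexivity).
    rewrite list_sum_map_add, list_sum_indicator_seq, IH by apply Ha. reflexivity.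
Qed.

(** * Geometry of the regular polygon *)

Definition dot (x y : R * R) : R := fst x * fst y + snd x * snd y.

Definition lerp (A B : R * R) (t : R) : R * R :=
  (fst A + t * (fst B - fst A), snd A + t * (snd B - snd A)).

Lemma dot_lerp_l (A B y : R * R) (t : R) :
  dot (lerp A B t) y = (1 - t) * dot A y + t * dot B y.
Proof. unfold dot, lerp; simpl; ring. Qed.

Lemma dot_lerp_r (A B y : R * R) (t : R) :
  dot y (lerp A B t) = (1 - t) * dot y A + t * dot y B.
Proof. unfold dot, lerp; simpl; ring. Qed.

Lemma dist2_nonneg (x a : R * R) : 0 <= dist2 x a.
Proof. unfold dist2. pose proof (pow2_ge_0 (fst x - fst a)). pose proof (pow2_ge_0 (snd x - snd a)). lra. Qed.

Lemma dist2_le_dot (P Q : R * R) : dist2 P Q <= 2 * dot P P + 2 * dot Q Q.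
Proof.
  unfold dist2, dot.
  pose proof (pow2_ge_0 (fst P + fst Q)). pose proof (pow2_ge_0 (snd P + snd Q)). nra.
Qed.

Lemma dist2_lerp (A B : R * R) (t s : R) :
  dist2 (lerp A B t) (lerp A B s) = dist2 B A * (t - s) ^ 2.
Proof. unfold dist2, lerp; simpl; ring. Qed.

Definition lerp_param (A B c : R * R) : R :=
  ((fst c - fst A) * (fst B - fst A) + (snd c - snd A) * (snd B - snd A)) / dist2 B A.

(* Pythagoras: [lerp A B (lerp_param A B c)] is the orthogonal projection of [c]. *)
Lemma dist2_lerp_ge (A B c : R * R) (t : R) : 0 < dist2 B A ->
  dist2 B A * (t - lerp_param A B c) ^ 2 <= dist2 (lerp A B t) c.
Proof.
  intros HD. unfold lerp_param, lerp, dist2 in *; cbn [fst snd] in *.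
  set (v1 := fst B - fst A) in *. set (v2 := snd B - snd A) in *.
  set (w1 := fst c - fst A). set (w2 := snd c - snd A).
  replace ((fst A + t * v1 - fst c) ^ 2 + (snd A + t * v2 - snd c) ^ 2)
    with ((t * v1 - w1) ^ 2 + (t * v2 - w2) ^ 2) by (unfold w1, w2; ring).
  assert (E : (t * v1 - w1) ^ 2 + (t * v2 - w2) ^ 2
              - (v1 ^ 2 + v2 ^ 2) * (t - (w1 * v1 + w2 * v2) / (v1 ^ 2 + v2 ^ 2)) ^ 2
              = (v1 * w2 - v2 * w1) ^ 2 / (v1 ^ 2 + v2 ^ 2)) by (field; lra).
  assert (0 <= (v1 * w2 - v2 * w1) ^ 2 / (v1 ^ 2 + v2 ^ 2))
    by (apply Rmult_le_pos; [apply pow2_ge_0 | apply Rlt_le, Rinv_0_lt_compat; lra]).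
  lra.
Qed.

(* Cauchy-Schwarz for the vectors [P - Q] and [x - c]. *)
Lemma dist2_ge_of_dot_gap (x c P Q : R * R) (g K : R) : 0 < K -> dist2 P Q <= K -> 0 <= g ->
  g <= (dot P x - dot Q x) - (dot P c - dot Q c) -> g ^ 2 / K <= dist2 x c.
Proof.
  intros HK HPQ Hg Hgap. unfold dist2, dot in *.
  set (u1 := fst P - fst Q) in *. set (u2 := snd P - snd Q) in *.
  set (w1 := fst x - fst c). set (w2 := snd x - snd c).
  assert (Hdot : g <= u1 * w1 + u2 * w2) by (unfold u1, u2, w1, w2; lra).
  assert (CS : (u1 * w1 + u2 * w2) ^ 2 <= (u1 ^ 2 + u2 ^ 2) * (w1 ^ 2 + w2 ^ 2)).
  { pose proof (pow2_ge_0 (u1 * w2 - u2 * w1)). nra. }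
  assert (g ^ 2 <= K * (w1 ^ 2 + w2 ^ 2)).
  { assert (0 <= w1 ^ 2 + w2 ^ 2) by nra. nra. }
  apply Rmult_le_reg_r with K; [lra |].
  unfold Rdiv. rewrite Rmult_assoc, Rinv_l by lra. unfold w1, w2 in *. lra.
Qed.

Lemma min_dist2_attained (x a0 : R * R) (l : list (R * R)) :
  exists a, In a (a0 :: l) /\ min_dist2 x a0 l = dist2 x a.
Proof.
  induction l as [| b l [a [Ha E]]]; simpl; [now exists a0; auto |].
  unfold Rmin. destruct Rle_dec.
  - exists b. simpl; auto.
  - exists a. split; [simpl in Ha |- *; tauto | auto].
Qed.

Lemma min_dist2_le (x a0 a : R * R) (l : list (R * R)) :
  In a (a0 :: l) -> min_dist2 x a0 l <= dist2 x a.
Proof.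
  induction l as [| b l IH]; simpl; intros H.
  - destruct H as [<- | []]. lra.
  - pose proof (Rmin_l (dist2 x b) (min_dist2 x a0 l)).
    pose proof (Rmin_r (dist2 x b) (min_dist2 x a0 l)).
    destruct H as [<- | [<- | H]]; [pose proof (IH (or_introl eq_refl)) | | pose proof (IH (or_intror H))];
      unfold min_dist2 in *; lra.
Qed.

Lemma min_dist2_nonneg (x a0 : R * R) (l : list (R * R)) : 0 <= min_dist2 x a0 l.
Proof. destruct (min_dist2_attained x a0 l) as [a [_ ->]]. apply dist2_nonneg. Qed.

Lemma continuous_min_dist2_lerp (A B a0 : R * R) (l : list (R * R)) (t : R) :
  continuous (fun t => min_dist2 (lerp A B t) a0 l) t.
Proof.
  induction l as [| a l IH]; simpl;
    [| apply continuous_Rmin; [| exact IH]];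
    apply (@ex_derive_continuous R_AbsRing R_NormedModule);
    unfold dist2, lerp; simpl; auto_derive; auto.
Qed.

Fixpoint argmax (g : nat -> R) (k : nat) : nat :=
  match k with
  | O => O
  | S k' => let b := argmax g k' in if Rle_dec (g k') (g b) then b else k'
  end.

Lemma argmax_lt (g : nat -> R) (k : nat) : (0 < k)%nat -> (argmax g k < k)%nat.
Proof.
  induction k as [| k IH]; intros Hk; [lia |].
  assert (E : argmax g (S k) = argmax g k \/ argmax g (S k) = k) by (simpl; destruct Rle_dec; auto).
  destruct k as [| k]; [change (argmax g 0) with 0%nat in E; lia |].
  specialize (IH ltac:(lia)). lia.
Qed.

Lemma le_argmax (g : nat -> R) (k i : nat) : (i < k)%nat -> g i <= g (argmax g k).
Proof.
  induction k as [| k IH]; intros Hi; [lia |]. simpl.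
  destruct (Nat.eq_dec i k) as [-> | Hik]; destruct Rle_dec as [Hle | Hlt]; try lra.
  - apply IH. lia.
  - pose proof (IH ltac:(lia)). lra.
Qed.

Section Polygon.

Variable m : nat.
Hypothesis m_ge3 : (3 <= m)%nat.

Definition step : R := 2 * PI / INR m.
Definition side_sq : R := 2 - 2 * cos step.
Definition mid (i : nat) : R * R := lerp (vertex m i) (vertex m (S i)) (1 / 2).
Definition side_of (c : R * R) : nat := argmax (fun i => dot (mid i) c) m.

Lemma INR_m_ge3 : 3 <= INR m.
Proof. replace 3 with (INR 3) by (simpl; ring). apply le_INR; auto. Qed.

Lemma INR_m_step : INR m * step = 2 * PI.
Proof. unfold step. pose proof INR_m_ge3. field. lra. Qed.

Lemma step_pos : 0 < step.
Proof. unfold step. pose proof PI_RGT_0. pose proof INR_m_ge3. apply Rdiv_lt_0_compat; lra. Qed.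

Lemma vertex_dot (p q : nat) : dot (vertex m p) (vertex m q) = cos ((INR p - INR q) * step).
Proof. unfold dot, vertex; simpl. rewrite <- cos_minus. f_equal. unfold step. ring. Qed.

Lemma vertex_dot_self (p : nat) : dot (vertex m p) (vertex m p) = 1.
Proof. rewrite vertex_dot, Rminus_diag, Rmult_0_l. apply cos_0. Qed.

Lemma vertex_dot_succ_l (p : nat) : dot (vertex m (S p)) (vertex m p) = cos step.
Proof. rewrite vertex_dot, S_INR. f_equal. ring. Qed.

Lemma vertex_dot_succ_r (p : nat) : dot (vertex m p) (vertex m (S p)) = cos step.
Proof. rewrite vertex_dot, S_INR. replace ((INR p - (INR p + 1)) * step) with (- step) by ring. apply cos_neg. Qed.

Lemma vertex_mod (k : nat) : vertex m (k mod m) = vertex m k.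
Proof.
  assert (Hk := Nat.div_mod k m ltac:(lia)).
  unfold vertex. fold step.
  replace (INR k * step) with (INR (k mod m) * step + 2 * INR (k / m) * PI).
  - rewrite <- !Rplus_assoc, cos_period, sin_period. reflexivity.
  - rewrite Hk at 3. rewrite plus_INR, mult_INR. pose proof INR_m_step. nra.
Qed.

Lemma cos_step_mul_le (d : nat) : (1 <= d <= m - 1)%nat -> cos (INR d * step) <= cos step.
Proof.
  intros Hd. pose proof step_pos. pose proof PI_RGT_0. pose proof INR_m_ge3. pose proof INR_m_step.
  (* By the symmetry [d <-> m - d] we may assume [d * step <= PI]. *)
  assert (Hhalf : forall e, (1 <= e)%nat -> (2 * e <= m)%nat -> cos (INR e * step) <= cos step).
  { intros e He1 He2.
    assert (1 <= INR e) by (replace 1 with (INR 1) by reflexivity; apply le_INR; auto).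
    assert (2 * INR e <= INR m)
      by (replace 2 with (INR 2) by reflexivity; rewrite <- mult_INR; apply le_INR; auto).
    apply cos_decr_1; nra. }
  destruct (le_lt_dec (2 * d) m); [apply Hhalf; lia |].
  replace (INR d * step) with (2 * PI - INR (m - d) * step) by (rewrite minus_INR by lia; nra).
  rewrite cos_minus, cos_2PI, sin_2PI, Rmult_1_l, Rmult_0_l, Rplus_0_r.
  apply Hhalf; lia.
Qed.

Lemma vertex_dot_le (p q : nat) : (p <= m)%nat -> (q <= m)%nat -> p <> q ->
  ~ (p = 0 /\ q = m)%nat -> ~ (p = m /\ q = 0)%nat -> dot (vertex m p) (vertex m q) <= cos step.
Proof.
  intros. rewrite vertex_dot. destruct (le_lt_dec p q).
  - replace ((INR p - INR q) * step) with (- (INR (q - p) * step)) by (rewrite minus_INR by lia; ring).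
    rewrite cos_neg. apply cos_step_mul_le; lia.
  - replace ((INR p - INR q) * step) with (INR (p - q) * step) by (rewrite minus_INR by lia; ring).
    apply cos_step_mul_le; lia.
Qed.

Lemma side_pt_lerp (j : nat) (t : R) : side_pt m j t = lerp (vertex m j) (vertex m (S j)) t.
Proof. unfold side_pt. rewrite vertex_mod. reflexivity. Qed.

Lemma dist2_vertex_succ (j : nat) : dist2 (vertex m (S j)) (vertex m j) = side_sq.
Proof.
  transitivity (dot (vertex m (S j)) (vertex m (S j)) + dot (vertex m j) (vertex m j)
                - 2 * dot (vertex m (S j)) (vertex m j)); [unfold dist2, dot; ring |].
  rewrite !vertex_dot_self, vertex_dot_succ_l. unfold side_sq. ring.
Qed.

Lemma side_sq_pos : 0 < side_sq.
Proof.
  unfold side_sq. pose proof step_pos. pose proof PI_RGT_0. pose proof INR_m_ge3. pose proof INR_m_step.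
  assert (cos step < cos 0) by (apply cos_decreasing_1; nra).
  rewrite cos_0 in *. lra.
Qed.

Lemma side_sq_le_4 : side_sq <= 4.
Proof. unfold side_sq. pose proof (COS_bound step). lra. Qed.

Lemma dist2_mid_le (i j : nat) : dist2 (mid i) (mid j) <= 4.
Proof.
  assert (Hmid : forall k, dot (mid k) (mid k) <= 1).
  { intros k. unfold mid. rewrite dot_lerp_l, !dot_lerp_r, !vertex_dot_self,
      vertex_dot_succ_l, vertex_dot_succ_r.
    pose proof (COS_bound step). lra. }
  pose proof (dist2_le_dot (mid i) (mid j)). pose proof (Hmid i). pose proof (Hmid j). lra.
Qed.

(* Expanding [dot (mid i) (side_pt m j t)] gives four inner products of vertices; for [i <> j]
   at most one of them equals [1] (adjacent sides), the others are at most [cos step]. *)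
Lemma dot_mid_gap (i j : nat) (t eta : R) : (i < m)%nat -> (j < m)%nat -> i <> j ->
  0 <= eta -> eta <= t <= 1 - eta ->
  eta * side_sq / 4 <= dot (mid j) (side_pt m j t) - dot (mid i) (side_pt m j t).
Proof.
  intros Hi Hj Hij He Ht. rewrite side_pt_lerp. unfold mid, side_sq.
  rewrite !dot_lerp_l, !dot_lerp_r, !vertex_dot_self, vertex_dot_succ_l, vertex_dot_succ_r.
  assert (h1 : dot (vertex m i) (vertex m j) <= cos step) by (apply vertex_dot_le; lia).
  assert (h2 : dot (vertex m (S i)) (vertex m (S j)) <= cos step) by (apply vertex_dot_le; lia).
  pose proof (COS_bound step) as [_ Hc].
  assert (h3 : dot (vertex m i) (vertex m (S j)) <= 1) by (rewrite vertex_dot; apply COS_bound).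
  assert (h4 : dot (vertex m (S i)) (vertex m j) <= 1) by (rewrite vertex_dot; apply COS_bound).
  assert (Hcases : (i <> S j /\ ~ (i = 0 /\ S j = m))%nat \/ (S i <> j /\ ~ (S i = m /\ j = 0))%nat)
    by lia.
  destruct Hcases as [[? ?] | [? ?]].
  - assert (dot (vertex m i) (vertex m (S j)) <= cos step) by (apply vertex_dot_le; lia). nra.
  - assert (dot (vertex m (S i)) (vertex m j) <= cos step) by (apply vertex_dot_le; lia). nra.
Qed.

Lemma side_of_lt (c : R * R) : (side_of c < m)%nat.
Proof. apply argmax_lt. lia. Qed.

Lemma dist2_side_pt_ge_off_side (j : nat) (t eta : R) (c : R * R) :
  (j < m)%nat -> side_of c <> j -> 0 <= eta -> eta <= t <= 1 - eta ->
  (eta * side_sq / 4) ^ 2 / 4 <= dist2 (side_pt m j t) c.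
Proof.
  intros Hj Hcj He Ht. pose proof side_sq_pos.
  apply (dist2_ge_of_dot_gap _ _ (mid j) (mid (side_of c))); [lra | apply dist2_mid_le | nra |].
  pose proof (dot_mid_gap (side_of c) j t eta (side_of_lt c) Hj Hcj He Ht).
  pose proof (le_argmax (fun i => dot (mid i) c) m j Hj). fold (side_of c) in *. lra.
Qed.

Lemma dist2_side_pt (j : nat) (t s : R) :
  dist2 (side_pt m j t) (side_pt m j s) = side_sq * (t - s) ^ 2.
Proof. rewrite !side_pt_lerp, dist2_lerp, dist2_vertex_succ. reflexivity. Qed.

Lemma dist2_side_pt_ge_param (j : nat) (t : R) (c : R * R) :
  side_sq * (t - lerp_param (vertex m j) (vertex m (S j)) c) ^ 2 <= dist2 (side_pt m j t) c.
Proof.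
  rewrite side_pt_lerp, <- (dist2_vertex_succ j).
  apply dist2_lerp_ge. rewrite dist2_vertex_succ. exact side_sq_pos.
Qed.

Definition off_side_gap (eta : R) : R := eta * side_sq / 16.

Lemma off_side_gap_pos (eta : R) : 0 < eta -> 0 < off_side_gap eta.
Proof. intros. pose proof side_sq_pos. unfold off_side_gap. nra. Qed.

Lemma covered_side (j : nat) (eta : R) (a0 : R * R) (l : list (R * R)) :
  (j < m)%nat -> 0 <= eta ->
  covered side_sq (off_side_gap eta) (fun t => min_dist2 (side_pt m j t) a0 l) eta (1 - eta)
    (map (lerp_param (vertex m j) (vertex m (S j))) (filter (fun c => side_of c =? j) (a0 :: l))).
Proof.
  intros Hj Heta t Ht. destruct (min_dist2_attained (side_pt m j t) a0 l) as [c [Hin ->]].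
  destruct (Nat.eq_dec (side_of c) j) as [Hcj | Hcj].
  - right. exists (lerp_param (vertex m j) (vertex m (S j)) c).
    split; [| apply dist2_side_pt_ge_param].
    right; right. apply in_map, filter_In. split; [exact Hin | now apply Nat.eqb_eq].
  - left. eapply Rle_trans; [| apply (dist2_side_pt_ge_off_side j t eta c); auto].
    pose proof side_sq_pos. pose proof side_sq_le_4. unfold off_side_gap.
    replace (side_sq * (eta * side_sq / 16) ^ 2)
      with ((eta * side_sq / 4) ^ 2 / 4 * (side_sq / 4)) by field.
    assert (0 <= (eta * side_sq / 4) ^ 2 / 4) by (apply Rmult_le_pos; [apply pow2_ge_0 | lra]).
    nra.
Qed.

End Polygon.

(** * Bounds on the conditional quantization error *)

Lemma continuous_min_dist2_side_pt (m j : nat) (a0 : R * R) (l : list (R * R)) (t : R) :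
  continuous (fun t => min_dist2 (side_pt m j t) a0 l) t.
Proof. exact (continuous_min_dist2_lerp (vertex m j) (vertex m (S j mod m)) a0 l t). Qed.

Lemma RInt_side_ge (m j : nat) (eta : R) (a0 : R * R) (l : list (R * R)) :
  (3 <= m)%nat -> (j < m)%nat -> 0 < eta < 1 / 2 ->
  quant_bound (side_sq m) (off_side_gap m eta) (1 - 2 * eta)
    (length (filter (fun c => side_of m c =? j) (a0 :: l)))
  <= RInt (fun t => min_dist2 (side_pt m j t) a0 l) 0 1.
Proof.
  intros Hm Hj Heta.
  set (f := fun t => min_dist2 (side_pt m j t) a0 l).
  assert (Hc : forall t, continuous f t) by apply continuous_min_dist2_side_pt.
  assert (Hf : forall t, 0 <= f t) by (intros; apply min_dist2_nonneg).
  rewrite (RInt_Chasles_cont f Hc 0 eta), (RInt_Chasles_cont f Hc eta (1 - eta)).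
  assert (0 <= RInt f 0 eta) by (apply RInt_ge_0; auto using ex_RInt_cont; lra).
  assert (0 <= RInt f (1 - eta) 1) by (apply RInt_ge_0; auto using ex_RInt_cont; lra).
  pose proof (RInt_ge_quant_bound _ _ f (side_sq_pos m Hm) (off_side_gap_pos m Hm eta ltac:(lra))
                Hc Hf _ eta (1 - eta) ltac:(lra) (covered_side m Hm j eta a0 l Hj ltac:(lra))) as Hmid.
  rewrite length_map in Hmid. replace (1 - eta - eta) with (1 - 2 * eta) in Hmid by ring.
  lra.
Qed.

Lemma cond_distortion_ge (m n : nat) (eta : R) (alpha : list (R * R)) :
  (3 <= m)%nat -> 0 < eta < 1 / 2 -> (length alpha <= n - m)%nat ->
  / INR m * quant_bound (side_sq m) (off_side_gap m eta) (INR m * (1 - 2 * eta)) (n + 2 * m)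
  <= cond_distortion m alpha.
Proof.
  intros Hm Heta Hl.
  unfold cond_distortion, P_integral.
  apply Rmult_le_compat_l; [left; apply Rinv_0_lt_compat, lt_0_INR; lia |].
  set (Cs := vertex m 0 :: alpha ++ beta m).
  set (k := fun j => length (filter (fun c => side_of m c =? j) Cs)).
  assert (Hk : list_sum (map k (seq 0 m)) = length Cs)
    by (apply list_sum_length_filter_eqb; intros; apply side_of_lt; lia).
  assert (HCs : (length Cs <= n + m + 1)%nat).
  { unfold Cs, beta. simpl. rewrite length_app, length_map, length_seq. lia. }
  apply Rle_trans with (quant_bound (side_sq m) (off_side_gap m eta)
    (sumR (fun _ => 1 - 2 * eta) (seq 0 m)) (list_sum (map k (seq 0 m)) + pred (length (seq 0 m)))).
  { rewrite sumR_const, length_seq.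
    apply quant_bound_antitone; [apply side_sq_pos; auto | apply Rmult_le_pos; [apply pos_INR | lra] | lia]. }
  eapply Rle_trans.
  { apply quant_bound_sumR; [apply side_sq_pos; auto | apply off_side_gap_pos; auto; lra
                           | intros; lra | destruct m; [lia | discriminate]]. }
  apply sumR_le. intros j Hj. apply in_seq in Hj.
  apply RInt_side_ge; auto. lia.
Qed.

Definition grid_codebook (m q : nat) : list (R * R) :=
  flat_map (fun j => map (fun i => side_pt m j (INR i / INR q)) (seq 1 (q - 1))) (seq 0 m).

Lemma length_grid_codebook (m q : nat) : length (grid_codebook m q) = (m * (q - 1))%nat.
Proof.
  unfold grid_codebook. rewrite (flat_map_constant_length (c := (q - 1)%nat)), length_seq; auto.
  intros. rewrite length_map, length_seq. reflexivity.
Qed.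

Lemma side_pt_0 (m j : nat) : side_pt m j 0 = vertex m j.
Proof. unfold side_pt. destruct (vertex m j); simpl; f_equal; ring. Qed.

Lemma side_pt_1 (m j : nat) : side_pt m j 1 = vertex m (S j mod m).
Proof. unfold side_pt. destruct (vertex m j), (vertex m (S j mod m)); simpl; f_equal; ring. Qed.

Lemma in_grid_codebook_app_beta (m j q i : nat) : (1 <= m)%nat -> (j < m)%nat -> (1 <= q)%nat ->
  (i <= q)%nat -> In (side_pt m j (INR i / INR q)) (grid_codebook m q ++ beta m).
Proof.
  intros Hm Hj Hq Hi. assert (Hq' : 0 < INR q) by (apply lt_0_INR; lia).
  apply in_or_app.
  destruct (Nat.eq_dec i 0) as [-> | Hi0]; [| destruct (Nat.eq_dec i q) as [-> | Hiq]].
  - right. replace (INR 0 / INR q) with 0 by (simpl; field; lra).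
    rewrite side_pt_0. apply in_map, in_seq. lia.
  - right. replace (INR q / INR q) with 1 by (field; lra).
    rewrite side_pt_1. apply in_map, in_seq.
    pose proof (Nat.mod_upper_bound (S j) m ltac:(lia)). lia.
  - left. apply in_flat_map. exists j. split; [apply in_seq; lia |].
    apply (in_map (fun i => side_pt m j (INR i / INR q))), in_seq. lia.
Qed.

Lemma RInt_side_grid_le (m j q : nat) : (3 <= m)%nat -> (j < m)%nat -> (1 <= q)%nat ->
  RInt (fun t => min_dist2 (side_pt m j t) (vertex m 0) (grid_codebook m q ++ beta m)) 0 1
  <= side_sq m / (12 * INR q ^ 2).
Proof.
  intros Hm Hj Hq. apply RInt_le_grid; auto using continuous_min_dist2_side_pt.
  intros i t Hi. rewrite <- (dist2_side_pt m Hm j).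
  apply min_dist2_le. right. apply in_grid_codebook_app_beta; auto. lia.
Qed.

Lemma cond_distortion_grid_le (m q : nat) : (3 <= m)%nat -> (1 <= q)%nat ->
  cond_distortion m (grid_codebook m q) <= side_sq m / (12 * INR q ^ 2).
Proof.
  intros Hm Hq. assert (HmR : 0 < INR m) by (apply lt_0_INR; lia).
  assert (0 < INR q) by (apply lt_0_INR; lia).
  unfold cond_distortion, P_integral.
  replace (side_sq m / (12 * INR q ^ 2))
    with (/ INR m * sumR (fun _ => side_sq m / (12 * INR q ^ 2)) (seq 0 m))
    by (rewrite sumR_const, length_seq; field; lra).
  apply Rmult_le_compat_l; [left; apply Rinv_0_lt_compat; lra |].
  apply sumR_le. intros j Hj. apply in_seq in Hj. apply RInt_side_grid_le; lia.
Qed.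

Lemma V_between (m n : nat) (Lo : R) (alpha : list (R * R)) :
  (forall a, (length a <= n - m)%nat -> Lo <= cond_distortion m a) ->
  (length alpha <= n - m)%nat -> Lo <= V m n <= cond_distortion m alpha.
Proof.
  intros HLo Halpha. unfold V.
  set (E := fun v => exists a : list (R * R), (length a <= n - m)%nat /\ v = cond_distortion m a).
  destruct (Glb_Rbar_correct E) as [Hlb Hglb].
  assert (H1 : Rbar_le (Glb_Rbar E) (cond_distortion m alpha)) by (apply Hlb; exists alpha; auto).
  assert (H2 : Rbar_le Lo (Glb_Rbar E)) by (apply Hglb; intros x [a [Ha ->]]; apply HLo; auto).
  destruct (Glb_Rbar E); simpl in *; try contradiction. lra.
Qed.

Definition quant_coef (m : nat) : R := side_sq m * INR m ^ 2 / 12.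

Lemma V_bounds (m n : nat) (eta : R) : (3 <= m)%nat -> (m < n)%nat -> 0 < eta < 1 / 2 ->
  / INR m * quant_bound (side_sq m) (off_side_gap m eta) (INR m * (1 - 2 * eta)) (n + 2 * m)
  <= V m n <= quant_coef m / (INR n - INR m) ^ 2.
Proof.
  intros Hm Hn Heta.
  set (q := (n / m)%nat).
  assert (Hq1 : (1 <= q)%nat) by (apply Nat.div_le_lower_bound; lia).
  assert (Hmq : (m * q <= n)%nat) by apply Nat.Div0.mul_div_le.
  assert (Hlen : (length (grid_codebook m q) <= n - m)%nat) by (rewrite length_grid_codebook; nia).
  destruct (V_between m n _ (grid_codebook m q) (fun a => cond_distortion_ge m n eta a Hm Heta) Hlen)
    as [Hlo Hup].
  split; [exact Hlo |].
  eapply Rle_trans; [apply Rle_trans with (1 := Hup), cond_distortion_grid_le; auto |].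
  assert (HmR : 3 <= INR m) by (apply INR_m_ge3; auto).
  assert (Hnm : INR n - INR m < INR m * INR q).
  { assert (Hd := Nat.div_mod n m ltac:(lia)). assert (Hr := Nat.mod_upper_bound n m ltac:(lia)).
    apply lt_INR in Hr. rewrite Hd at 1. rewrite plus_INR, mult_INR. fold q. lra. }
  assert (HnmR : 0 < INR n - INR m) by (apply Rlt_0_minus, lt_INR; lia).
  pose proof (side_sq_pos m Hm).
  unfold quant_coef.
  replace (side_sq m * INR m ^ 2 / 12 / (INR n - INR m) ^ 2)
    with (side_sq m / (12 * ((INR n - INR m) / INR m) ^ 2)) by (field; lra).
  unfold Rdiv at 1 3. apply Rmult_le_compat_l; [lra |].
  apply Rinv_le_contravar; [apply Rmult_lt_0_compat; [lra | apply pow_lt, Rdiv_lt_0_compat; lra] |].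
  apply Rmult_le_compat_l; [lra |]. apply pow_incr. split; [apply Rlt_le, Rdiv_lt_0_compat; lra |].
  apply Rmult_le_reg_r with (INR m); [lra |]. unfold Rdiv. rewrite Rmult_assoc, Rinv_l; lra.
Qed.

(** * Asymptotics *)

Lemma is_lim_seq_eventually_lt (u : nat -> R) (l x : R) :
  is_lim_seq u l -> l < x -> eventually (fun n => u n < x).
Proof.
  intros H Hx. apply is_lim_seq_spec in H. destruct (H (mkposreal (x - l) ltac:(lra))) as [N HN].
  exists N. intros n Hn. specialize (HN n Hn). apply Rabs_lt_between' in HN. simpl in HN. lra.
Qed.

Lemma is_lim_seq_eventually_gt (u : nat -> R) (l x : R) :
  is_lim_seq u l -> x < l -> eventually (fun n => x < u n).
Proof.
  intros H Hx. apply is_lim_seq_spec in H. destruct (H (mkposreal (l - x) ltac:(lra))) as [N HN].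
  exists N. intros n Hn. specialize (HN n Hn). apply Rabs_lt_between' in HN. simpl in HN. lra.
Qed.

Lemma eventually_lt_INR_sq_mult (x y : R) : 0 < y -> eventually (fun n => x < INR n ^ 2 * y).
Proof.
  intros Hy. pose proof is_lim_seq_INR as H. apply is_lim_seq_spec in H.
  destruct (H (Rmax 1 (x / y))) as [N HN]. exists N. intros n Hn. specialize (HN n Hn).
  pose proof (Rmax_l 1 (x / y)). pose proof (Rmax_r 1 (x / y)).
  assert (x / y * y < INR n ^ 2 * y) by (apply Rmult_lt_compat_r; nra).
  replace (x / y * y) with x in * by (field; lra). lra.
Qed.

Lemma is_lim_seq_ratio_sq (a : R) : is_lim_seq (fun n => (INR n / (INR n + a)) ^ 2) 1.
Proof.
  assert (Hinv : is_lim_seq (fun n => / INR n) 0).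
  { replace (Finite 0) with (Rbar_inv p_infty) by reflexivity.
    apply is_lim_seq_inv; [apply is_lim_seq_INR | discriminate]. }
  assert (H : is_lim_seq (fun n => / (1 + a * / INR n)) (/ (1 + a * 0))).
  { apply (is_lim_seq_inv _ (1 + a * 0)).
    - apply (is_lim_seq_plus' _ _ 1 (a * 0)); [apply is_lim_seq_const |].
      apply (is_lim_seq_mult' (fun _ => a)); [apply is_lim_seq_const | exact Hinv].
    - intro E. injection E. lra. }
  replace (/ (1 + a * 0)) with 1 in H by field.
  assert (H2 := is_lim_seq_mult' _ _ _ _ H H). rewrite Rmult_1_l in H2.
  apply (is_lim_seq_ext_loc (fun n => / (1 + a * / INR n) * / (1 + a * / INR n))); [| exact H2].
  pose proof is_lim_seq_INR as HI. apply is_lim_seq_spec in HI.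
  destruct (HI (Rabs a + 1)) as [N HN]. exists N. intros n Hn. specialize (HN n Hn).
  pose proof (Rle_abs a). pose proof (Rle_abs (- a)). rewrite Rabs_Ropp in *.
  simpl. field. split; lra.
Qed.

Lemma quant_coef_pos (m : nat) : (3 <= m)%nat -> 0 < quant_coef m.
Proof.
  intros Hm. pose proof (side_sq_pos m Hm). pose proof (INR_m_ge3 m Hm).
  unfold quant_coef. assert (0 < INR m ^ 2) by (apply pow_lt; lra). nra.
Qed.

Lemma sq_mul_V_le (m n : nat) : (3 <= m)%nat -> (m < n)%nat ->
  INR n ^ 2 * V m n <= quant_coef m * (INR n / (INR n - INR m)) ^ 2.
Proof.
  intros Hm Hn. destruct (V_bounds m n (1 / 4) Hm Hn ltac:(lra)) as [_ Hup].
  assert (0 < INR n - INR m) by (apply Rlt_0_minus, lt_INR; lia).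
  replace (quant_coef m * (INR n / (INR n - INR m)) ^ 2)
    with (INR n ^ 2 * (quant_coef m / (INR n - INR m) ^ 2)) by (field; lra).
  apply Rmult_le_compat_l; [apply pow2_ge_0 | exact Hup].
Qed.

Lemma sq_mul_V_ge (m : nat) (eta : R) : (3 <= m)%nat -> 0 < eta < 1 / 2 ->
  exists C, 0 < C /\ forall n, (m < n)%nat ->
    Rmin (INR n ^ 2 * C) (quant_coef m * (1 - 2 * eta) ^ 3 * (INR n / (INR n + (2 * INR m + 1))) ^ 2)
    <= INR n ^ 2 * V m n.
Proof.
  intros Hm Heta. pose proof (INR_m_ge3 m Hm). pose proof (side_sq_pos m Hm).
  pose proof (off_side_gap_pos m Hm eta ltac:(lra)).
  exists (/ INR m * (2 * side_sq m * off_side_gap m eta ^ 3 / 3)). split.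
  { apply Rmult_lt_0_compat; [apply Rinv_0_lt_compat; lra |].
    assert (0 < off_side_gap m eta ^ 3) by (apply pow_lt; lra). nra. }
  intros n Hn. destruct (V_bounds m n eta Hm Hn Heta) as [Hlo _].
  assert (Hn2 : 0 <= INR n ^ 2) by apply pow2_ge_0.
  eapply Rle_trans; [| apply Rmult_le_compat_l; [exact Hn2 | exact Hlo]].
  unfold quant_bound.
  rewrite Rmult_min_distr_l by (left; apply Rinv_0_lt_compat; lra).
  rewrite Rmult_min_distr_l by exact Hn2.
  apply Rmin_le_compat_l. right.
  pose proof (pos_INR n). rewrite plus_INR, mult_INR. unfold quant_coef. simpl INR. field. lra.
Qed.

Lemma eventually_sq_mul_V_lt (m : nat) (eps : R) : (3 <= m)%nat -> 0 < eps ->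
  eventually (fun n => INR n ^ 2 * V m n < quant_coef m + eps).
Proof.
  intros Hm Heps.
  assert (Hlim := is_lim_seq_scal_l _ (quant_coef m) 1 (is_lim_seq_ratio_sq (- INR m))).
  simpl in Hlim. rewrite Rmult_1_r in Hlim.
  apply (filter_imp (fun n => (m < n)%nat /\
    quant_coef m * (INR n / (INR n - INR m)) ^ 2 < quant_coef m + eps)).
  - intros n [Hn Hlt]. pose proof (sq_mul_V_le m n Hm Hn). lra.
  - apply filter_and; [now exists (S m) | apply (is_lim_seq_eventually_lt _ _ _ Hlim); lra].
Qed.

Lemma exists_eta_cube (c eps : R) : 0 < c -> 0 < eps ->
  exists eta, 0 < eta < 1 / 2 /\ c - eps < c * (1 - 2 * eta) ^ 3.
Proof.
  intros Hc Heps. exists (Rmin (1 / 4) (eps / (12 * c))).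
  assert (H0 : 0 < eps / (12 * c)) by (apply Rdiv_lt_0_compat; lra).
  assert (H1 : eps / (12 * c) * (12 * c) = eps) by (field; lra).
  pose proof (Rmin_l (1 / 4) (eps / (12 * c))). pose proof (Rmin_r (1 / 4) (eps / (12 * c))).
  set (eta := Rmin (1 / 4) (eps / (12 * c))) in *.
  assert (0 < eta) by (apply Rmin_pos; lra).
  split; [lra |].
  assert (1 - 6 * eta <= (1 - 2 * eta) ^ 3) by nra.
  nra.
Qed.

Lemma eventually_sq_mul_V_gt (m : nat) (eps : R) : (3 <= m)%nat -> 0 < eps ->
  eventually (fun n => quant_coef m - eps < INR n ^ 2 * V m n).
Proof.
  intros Hm Heps.
  destruct (exists_eta_cube (quant_coef m) eps (quant_coef_pos m Hm) Heps) as [eta [Heta Hcube]].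
  destruct (sq_mul_V_ge m eta Hm Heta) as [C [HC Hge]].
  set (K := quant_coef m * (1 - 2 * eta) ^ 3) in *.
  assert (Hlim := is_lim_seq_scal_l _ K 1 (is_lim_seq_ratio_sq (2 * INR m + 1))).
  simpl in Hlim. rewrite Rmult_1_r in Hlim.
  apply (filter_imp (fun n => (m < n)%nat /\ quant_coef m - eps < INR n ^ 2 * C /\
           quant_coef m - eps < K * (INR n / (INR n + (2 * INR m + 1))) ^ 2)).
  - intros n [Hn [H1 H2]]. eapply Rlt_le_trans; [| exact (Hge n Hn)]. now apply Rmin_glb_lt.
  - apply filter_and; [now exists (S m) |].
    apply filter_and; [now apply eventually_lt_INR_sq_mult |].
    exact (is_lim_seq_eventually_gt _ _ _ Hlim Hcube).
Qed.

Lemma is_lim_seq_sq_mul_V (m : nat) : (3 <= m)%nat ->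
  is_lim_seq (fun n => INR n ^ 2 * V m n) (quant_coef m).
Proof.
  intros Hm. apply is_lim_seq_spec. intros eps.
  apply (filter_imp (fun n => INR n ^ 2 * V m n < quant_coef m + eps /\
                              quant_coef m - eps < INR n ^ 2 * V m n)).
  - intros n Hn. apply Rabs_lt_between'. lra.
  - apply filter_and; [apply eventually_sq_mul_V_lt | apply eventually_sq_mul_V_gt]; auto; apply cond_pos.
Qed.

Lemma is_lim_seq_0_of_sq_mult (u : nat -> R) (l : R) :
  is_lim_seq (fun n => INR n ^ 2 * u n) l -> is_lim_seq u 0.
Proof.
  intros H.
  assert (Hinv : is_lim_seq (fun n => / INR n) 0).
  { replace (Finite 0) with (Rbar_inv p_infty) by reflexivity.
    apply is_lim_seq_inv; [apply is_lim_seq_INR | discriminate]. }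
  replace (Finite 0) with (Finite (l * (0 * 0))) by (f_equal; ring).
  apply (is_lim_seq_ext_loc (fun n => INR n ^ 2 * u n * (/ INR n * / INR n))).
  - exists 1%nat. intros n Hn. assert (0 < INR n) by (apply lt_0_INR; lia). field. lra.
  - apply is_lim_seq_mult'; [exact H | apply is_lim_seq_mult'; exact Hinv].
Qed.

Lemma quant_coef_eq (m : nat) : (3 <= m)%nat ->
  quant_coef m = 1 / 3 * INR m ^ 2 * sin (PI / INR m) ^ 2.
Proof.
  intros Hm. pose proof (INR_m_ge3 m Hm).
  unfold quant_coef, side_sq, step.
  replace (2 * PI / INR m) with (2 * (PI / INR m)) by (field; lra).
  rewrite cos_2a_sin. field.
Qed.

Theorem theorem5p6 (m : nat) (hm : (3 <= m)%nat) :
  exists Vinf : R,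
    is_lim_seq (fun n => V m n) Vinf /\
    is_lim_seq (fun n => INR n ^ 2 * (V m n - Vinf))
      (1 / 3 * INR m ^ 2 * (sin (PI / INR m)) ^ 2).
Proof.
  pose proof (is_lim_seq_sq_mul_V m hm) as Hlim.
  exists 0. split.
  - exact (is_lim_seq_0_of_sq_mult _ _ Hlim).
  - rewrite <- quant_coef_eq by exact hm.
    apply (is_lim_seq_ext _ _ _ (fun n => f_equal _ (eq_sym (Rminus_0_r _))) Hlim).
Qed.
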